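(* For every ensemble $\mathcal{E}=\{\eta_{i},\rho_{i}\}_{i\in\mathbb{N}_{n}}$, $p_{\sf G}(\mathcal{E})=q_{\sf G}(\mathcal{E})$.
   Context: $\mathbb{N}_{n}=\{1,\ldots,n\}$. $\mathcal{H}$ is a finite-dimensional complex Hilbert space, $\mathbb{H}$ the Hermitian operators on it, $\mathbb{H}_{+}$ the positive-semidefinite ones, $\mathbbm{1}$ the identity. An ensemble $\mathcal{E}=\{\eta_{i},\rho_{i}\}_{i\in\mathbb{N}_{n}}$: density operators $\rho_i$ with probabilities $\eta_i>0$, $\sum_i\eta_i=1$; $\rho_0=\sum_i\eta_i\rho_i$. A measurement is $\{M_{?}\}\cup\{M_{i}\}_{i\in\mathbb{N}_{n}}\subseteq\mathbb{H}_+$ with $M_?+\sum_iM_i=\mathbbm{1}$. $\mathcal{C}_{x}(\mathcal{E})$ is the maximum of $\eta_{x}\Tr(\rho_{x}M_{x})/\Tr(\rho_{0}M_{x})$ over measurements with $\Tr(\rho_{0}M_{x})>0$. $\mathbb{M}_{i}(\mathcal{E})=\{E\in\mathbb{H}_{+}\mid\Tr[(\mathcal{C}_{i}(\mathcal{E})\rho_{0}-\eta_{i}\rho_{i})E]=0\}$ and $\mathbb{M}_{i}^{*}(\mathcal{E})=\{E\in\mathbb{H}\mid\Tr(EF)\ge0\ \forall F\in\mathbb{M}_{i}(\mathcal{E})\}$. $\mathbb{M}(\mathcal{E})$ is the set of measurements with $M_i\in\mathbb{M}_i(\mathcal{E})$ for all $i$. $p_{\sf G}(\mathcal{E})=\max_{\mathcal{M}\in\mathbb{M}(\mathcal{E})}\sum_{i}\eta_{i}\Tr(\rho_{i}M_{i})$.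 $\mathbb{H}(\mathcal{E})=\{H\in\mathbb{H}_{+}\mid H-\eta_{i}\rho_{i}\in\mathbb{M}_{i}^{*}(\mathcal{E})\ \forall i\}$ and $q_{\sf G}(\mathcal{E})=\min_{H\in\mathbb{H}(\mathcal{E})}\Tr H$. *)

(* matrices over C := complex R for an arbitrary R : realType
   (R[i] is a numClosedFieldType since every realType is real closed). *)
From HB Require Import structures.
From mathcomp Require Import all_boot all_order all_algebra.
From mathcomp Require Import classical_sets reals.
From mathcomp Require Import complex.

Set Implicit Arguments.
Unset Strict Implicit.
Unset Printing Implicit Defensive.

Import Order.TTheory GRing.Theory Num.Theory.
Local Open Scope ring_scope.
Local Open Scope classical_set_scope.

Section QuantumDefs.
Variable R : realType.
Local Notation C := (complex.complex R).

Definition RtoC (x : R) : C := complex.Complex x 0.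

Variable d : nat. (* the Hilbert space is C^d *)

Definition adjmx (m p : nat) (A : 'M[C]_(m, p)) : 'M[C]_(p, m) :=
  map_mx Num.conj (A^T).

Definition hermitian (A : 'M[C]_d) : Prop := adjmx A = A.

Definition psd (A : 'M[C]_d) : Prop :=
  hermitian A /\ forall v : 'cV[C]_d, 0 <= (adjmx v *m A *m v) 0 0.

Definition density (rho : 'M[C]_d) : Prop := psd rho /\ \tr rho = 1.

Variable n : nat.

Definition ensemble (eta : 'I_n -> R) (rho : 'I_n -> 'M[C]_d) : Prop :=
  (forall i, 0 < eta i) /\ \sum_(i < n) eta i = 1 /\ (forall i, density (rho i)).

Variables (eta : 'I_n -> R) (rho : 'I_n -> 'M[C]_d).

Definition rho0 : 'M[C]_d := \sum_(i < n) RtoC (eta i) *: rho i.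

(* measurements {M_?} \cup {M_i}_{i in N_n} *)
Definition measurement (Mq : 'M[C]_d) (M : 'I_n -> 'M[C]_d) : Prop :=
  psd Mq /\ (forall i, psd (M i)) /\ Mq + \sum_(i < n) M i = 1%:M.

(* C_x(E): the optimal value of eta_x Tr(rho_x M_x) / Tr(rho_0 M_x)
   over measurements with Tr(rho_0 M_x) > 0 (the paper's maximum). *)
Definition Cx (x : 'I_n) : R :=
  sup [set r : R | exists Mq M, measurement Mq M /\ 0 < \tr (rho0 *m M x) /\
        r = complex.Re (RtoC (eta x) * \tr (rho x *m M x) / \tr (rho0 *m M x))].

Definition Mset (i : 'I_n) : set 'M[C]_d :=
  [set E | psd E /\ \tr ((RtoC (Cx i) *: rho0 - RtoC (eta i) *: rho i) *m E) = 0].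

Definition Mdual (i : 'I_n) : set 'M[C]_d :=
  [set E | hermitian E /\ forall F, Mset i F -> 0 <= \tr (E *m F)].

Definition Mmeas (Mq : 'M[C]_d) (M : 'I_n -> 'M[C]_d) : Prop :=
  measurement Mq M /\ forall i, Mset i (M i).

Definition pG : R :=
  sup [set r : R | exists Mq M, Mmeas Mq M /\
        r = complex.Re (\sum_(i < n) RtoC (eta i) * \tr (rho i *m M i))].

Definition Hset : set 'M[C]_d :=
  [set H | psd H /\ forall i, Mdual i (H - RtoC (eta i) *: rho i)].

Definition qG : R := inf [set r : R | exists H, Hset H /\ r = complex.Re (\tr H)].

End QuantumDefs.

(* Weak duality is the usual pairing of a measurement with a dual-feasible H.
   For strong duality, consider the perturbation function phi(X): the supremum
   of the objective over cone-valued families Mf with sum_i Mf_i below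
   herm(X) + t*1, each unit of slack t being charged a fixed penalty. phi is
   superadditive and positively homogeneous, nonnegative on psd matrices, at
   least Re tr(c_i F) on F in K_i, and phi(s*1) <= s*p for the primal value p.
   A finite-dimensional Hahn-Banach extension in real coordinates then gives a
   real-linear functional X |-> Re tr(G X) above phi which equals p at the
   identity; the hermitian part of G is dual feasible with trace at most p. *)

From Pilot Require Import Defs.
From HB Require Import structures.
From mathcomp Require Import all_boot all_order all_algebra.
From mathcomp Require Import classical_sets reals complex lra.
From mathcomp Require Import spectral.
(* [spectral] puts sesquilinear's [hermitian] notation in scope; [hermitian]
   below always means the predicate of [Defs]. *)
Import Defs.

Set Implicit Arguments.
Unset Strict Implicit.
Unset Printing Implicit Defensive.
Import Order.TTheory GRing.Theory Num.Theory.
Local Open Scope ring_scope.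

Section RealPart.
Variable R : realType.
Local Notation C := R[i].

Lemma RtoCE (x : R) : RtoC x = x%:C%C. Proof. by []. Qed.
Lemma RtoCD (x y : R) : RtoC (x + y) = RtoC x + RtoC y.
Proof. by rewrite !RtoCE rmorphD. Qed.
Lemma RtoCM (x y : R) : RtoC (x * y) = RtoC x * RtoC y.
Proof. by rewrite !RtoCE rmorphM. Qed.
Lemma RtoCN (x : R) : RtoC (- x) = - RtoC x.
Proof. by rewrite !RtoCE rmorphN. Qed.
Lemma RtoC_natr (k : nat) : RtoC (k%:R : R) = k%:R.
Proof. by rewrite RtoCE rmorph_nat. Qed.
Lemma conj_RtoC (x : R) : Num.conj (RtoC x) = RtoC x.
Proof. by apply: conj_Creal; rewrite RtoCE complex_real. Qed.

Lemma ReD (x y : C) : complex.Re (x + y) = complex.Re x + complex.Re y.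
Proof. by case: x; case: y. Qed.
Lemma ReN (x : C) : complex.Re (- x) = - complex.Re x.
Proof. by case: x. Qed.
Lemma ReB (x y : C) : complex.Re (x - y) = complex.Re x - complex.Re y.
Proof. by rewrite ReD ReN. Qed.
Lemma Re_sum (I : Type) (r : seq I) (P : pred I) (F : I -> C) :
  complex.Re (\sum_(i <- r | P i) F i) = \sum_(i <- r | P i) complex.Re (F i).
Proof. exact: (big_morph _ ReD). Qed.
Lemma Re_RtoCM (t : R) (x : C) : complex.Re (RtoC t * x) = t * complex.Re x.
Proof. by case: x => a b /=; rewrite !mul0r subr0. Qed.
Lemma Re_natr (k : nat) : complex.Re (k%:R : C) = k%:R.
Proof. by elim: k => // k IH; rewrite -natr1 ReD IH -natr1. Qed.
Lemma Re_conj (z : C) : complex.Re (Num.conj z) = complex.Re z.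
Proof. by case: z. Qed.

Lemma Re_le (x y : C) : x <= y -> complex.Re x <= complex.Re y.
Proof. by rewrite lecE => /andP[]. Qed.
Lemma Re_ge0 (z : C) : 0 <= z -> 0 <= complex.Re z.
Proof. exact: Re_le. Qed.
Lemma real_Re_ge0 (z : C) : z \is Num.real -> 0 <= complex.Re z -> 0 <= z.
Proof. by case: z => a b; rewrite complex_real lecE /= => /eqP -> ->; rewrite eqxx. Qed.
Lemma RtoC_Re (z : C) : z \is Num.real -> RtoC (complex.Re z) = z.
Proof. by case: z => a b; rewrite complex_real => /eqP ->. Qed.

End RealPart.

Section FiniteHahnBanach.
Local Open Scope classical_set_scope.
Variables (R : realType) (I : finType).
Local Notation vec := {ffun I -> R}.
Implicit Types (a b : vec) (lam : I -> R).

Definition scalef (t : R) a : vec := [ffun i => t * a i].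
Definition deltaf (x : I) : vec := [ffun i => (i == x)%:R].
Definition supported (S : {set I}) a := forall i, i \notin S -> a i = 0.
Definition pairing lam a := \sum_i lam i * a i.

Lemma pairingD lam a b : pairing lam (a + b) = pairing lam a + pairing lam b.
Proof. by rewrite /pairing -big_split; apply: eq_bigr => i _; rewrite ffunE mulrDr. Qed.
Lemma pairingZ lam t a : pairing lam (scalef t a) = t * pairing lam a.
Proof. by rewrite /pairing mulr_sumr; apply: eq_bigr => i _; rewrite ffunE mulrCA. Qed.

Lemma pairing_delta lam x : pairing lam (deltaf x) = lam x.
Proof.
rewrite /pairing (bigD1 x) //= big1 => [|i /negPf ix]; last by rewrite ffunE ix mulr0.
by rewrite ffunE eqxx mulr1 addr0.
Qed.

Lemma scalef0 a : scalef 0 a = 0.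
Proof. by apply/ffunP => i; rewrite !ffunE mul0r. Qed.

Lemma scalef_invK t a b : t != 0 -> scalef t (scalef t^-1 a + b) = a + scalef t b.
Proof. by move=> t0; apply/ffunP => i; rewrite !ffunE mulrDr mulrA mulfV // mul1r. Qed.

Lemma supported_decomp (S : {set I}) y a : supported (y |: S) a ->
  exists2 a', supported S a' & a = a' + scalef (a y) (deltaf y) /\ a' y = 0.
Proof.
move=> Sa; exists (a - scalef (a y) (deltaf y)); last first.
  by rewrite subrK !ffunE eqxx mulr1 subrr.
move=> i iS; rewrite !ffunE; have [->|iy] := eqVneq i y; first by rewrite mulr1 subrr.
by rewrite mulr0 subr0 Sa // in_setU1 (negPf iy).
Qed.

Variable p : vec -> R.
Hypothesis p_subadd : forall a b, p (a + b) <= p a + p b.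
Hypothesis p_poshom : forall t a, 0 < t -> p (scalef t a) = t * p a.

Lemma hahn_banach_gap (S : {set I}) y lam a b :
  (forall a, supported S a -> pairing lam a <= p a) ->
  supported S a -> supported S b ->
  pairing lam a - p (a - deltaf y) <= p (b + deltaf y) - pairing lam b.
Proof.
move=> lam_le Sa Sb; rewrite lerBrDr addrAC lerBlDr -pairingD.
have Sab : supported S (a + b) by move=> i iS; rewrite ffunE Sa ?Sb ?addr0.
apply: le_trans (lam_le _ Sab) _; rewrite [X in _ <= X]addrC.
by have := p_subadd (a - deltaf y) (b + deltaf y); rewrite addrACA addNr addr0.
Qed.

(* Any value between the two sides of [hahn_banach_gap] extends [lam] to the
   coordinate [y]; we take the supremum of the left-hand sides. *)
Lemma hahn_banach_step (S : {set I}) y lam : y \notin S ->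
  (forall a, supported S a -> pairing lam a <= p a) ->
  exists mu, forall a, supported (y |: S) a ->
    pairing (fun i => if i == y then mu else lam i) a <= p a.
Proof.
move=> yS lam_le; pose lo := [set pairing lam a - p (a - deltaf y) | a in supported S].
have S0 : supported S 0 by move=> i _; rewrite ffunE.
have lo_ub b : supported S b -> ubound lo (p (b + deltaf y) - pairing lam b).
  by move=> Sb _ [a Sa <-]; apply: hahn_banach_gap lam_le Sa Sb.
have mu_ge a : supported S a -> pairing lam a - p (a - deltaf y) <= sup lo.
  move=> Sa; apply: ub_le_sup; last by exists a.
  by exists (p (0 + deltaf y) - pairing lam 0); apply: lo_ub.
have mu_le b : supported S b -> sup lo <= p (b + deltaf y) - pairing lam b.
  by move=> Sb; apply: ge_sup (lo_ub _ Sb); exists (pairing lam 0 - p (0 - deltaf y)), 0.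
exists (sup lo) => a /supported_decomp[a' Sa' [-> a'y]].
have -> : pairing (fun i => if i == y then sup lo else lam i)
    (a' + scalef (a y) (deltaf y)) = pairing lam a' + a y * sup lo.
  rewrite pairingD pairingZ pairing_delta eqxx; congr (_ + _).
  by apply: eq_bigr => i _; case: eqP => [->|]; rewrite ?a'y ?mulr0.
have Sa'V t : supported S (scalef t a') by move=> i iS; rewrite ffunE Sa' ?mulr0.
have [ay_lt0|ay_gt0|->] := ltgtP (a y) 0; last first.
- by rewrite mul0r addr0 scalef0 addr0; apply: lam_le.
- have := mu_le _ (Sa'V (a y)^-1).
  rewrite pairingZ lerBrDl -(ler_pM2l ay_gt0) -p_poshom // scalef_invK ?gt_eqF //.
  by rewrite mulrDr mulrA mulfV ?gt_eqF // mul1r mulrC.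
- set s := - a y; have s_gt0 : 0 < s by rewrite oppr_gt0.
  have := mu_ge _ (Sa'V s^-1).
  rewrite pairingZ lerBlDr -(ler_pM2l s_gt0) mulrDr mulrA mulfV ?gt_eqF // mul1r.
  rewrite -p_poshom // scalef_invK ?gt_eqF //.
  have -> : scalef s (- deltaf y) = scalef (a y) (deltaf y).
    by apply/ffunP => i; rewrite !ffunE mulrN -mulNr opprK.
  by rewrite /s mulNr => h; rewrite mulrC; lra.
Qed.

Lemma supportedS (S T : {set I}) a : S \subset T -> supported S a -> supported T a.
Proof. by move=> ST Sa i iT; apply: Sa; apply: contra iT => /(fintype.subsetP ST). Qed.

Lemma finite_hahn_banach (x0 : I) (c : R) :
  (forall t, t * c <= p (scalef t (deltaf x0))) ->
  exists lam, lam x0 = c /\ forall a, pairing lam a <= p a.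
Proof.
move=> c_le.
suff [lam [lam_x0 lam_le]] : exists lam, lam x0 = c /\
    forall a, supported (x0 |: [set:: enum I]) a -> pairing lam a <= p a.
  by exists lam; split => // a; apply: lam_le => i; rewrite !inE mem_enum orbT.
elim: (enum I) => [|y s [lam [lam_x0 lam_le]]].
  exists (fun i => if i == x0 then c else 0); split=> [|a]; first by rewrite eqxx.
  move=> /supported_decomp[a' a'0 [-> _]].
  have -> : a' = 0 by apply/ffunP => i; rewrite ffunE a'0 ?inE.
  by rewrite add0r pairingZ pairing_delta eqxx.
have sub_cons : x0 |: [set:: y :: s] \subset y |: (x0 |: [set:: s]).
  by apply/fintype.subsetP => i; rewrite !inE; case: (i == y); rewrite ?orbT.
have [yS|yS] := boolP (y \in x0 |: [set:: s]).
  exists lam; split=> // a Sa; apply: lam_le; apply: supportedS Sa.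
  apply: (fintype.subset_trans sub_cons).
  by rewrite finset.subUset finset.sub1set yS fintype.subxx.
have [mu mu_le] := hahn_banach_step yS lam_le.
exists (fun i => if i == y then mu else lam i); split.
  by case: eqP yS => // ->; rewrite setU11.
by move=> a /(supportedS sub_cons); apply: mu_le.
Qed.

End FiniteHahnBanach.

Section Adjoint.
Variable R : realType.
Local Notation C := R[i].

Lemma adjmxE m p (A : 'M[C]_(m, p)) i j : adjmx A i j = Num.conj (A j i).
Proof. by rewrite !mxE. Qed.
Lemma adjmxK m p (A : 'M[C]_(m, p)) : adjmx (adjmx A) = A.
Proof. exact: trmxCK. Qed.
Lemma adjmxM m p q (A : 'M[C]_(m, p)) (B : 'M[C]_(p, q)) :
  adjmx (A *m B) = adjmx B *m adjmx A.
Proof. by rewrite /adjmx trmx_mul map_mxM. Qed.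
Lemma adjmxD m p (A B : 'M[C]_(m, p)) : adjmx (A + B) = adjmx A + adjmx B.
Proof. by apply/matrixP => i j; rewrite !mxE rmorphD. Qed.
Lemma adjmxN m p (A : 'M[C]_(m, p)) : adjmx (- A) = - adjmx A.
Proof. by apply/matrixP => i j; rewrite !mxE rmorphN. Qed.
Lemma adjmxZ m p (a : C) (A : 'M[C]_(m, p)) : adjmx (a *: A) = Num.conj a *: adjmx A.
Proof. by apply/matrixP => i j; rewrite !mxE rmorphM. Qed.
Lemma adjmx0 m p : adjmx (0 : 'M[C]_(m, p)) = 0.
Proof. by apply/matrixP => i j; rewrite !mxE rmorph0. Qed.
Lemma adjmx1 m : adjmx (1%:M : 'M[C]_m) = 1%:M.
Proof.
by apply/matrixP => i j; rewrite !mxE eq_sym; case: (i == j); rewrite ?rmorph1 ?rmorph0.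
Qed.
Lemma adjmx_sum m p (I : finType) (F : I -> 'M[C]_(m, p)) :
  adjmx (\sum_i F i) = \sum_i adjmx (F i).
Proof. exact: (big_morph _ (@adjmxD m p) (@adjmx0 m p)). Qed.
Lemma mxtrace_adj m (A : 'M[C]_m) : \tr (adjmx A) = Num.conj (\tr A).
Proof. by rewrite /mxtrace rmorph_sum; apply: eq_bigr => i _; rewrite adjmxE. Qed.

End Adjoint.

Section PositiveSemidefinite.
Variables (R : realType) (d : nat).
Local Notation C := R[i].
Local Notation M := 'M[C]_d.
Implicit Types (A B X Y : M) (v : 'cV[C]_d).

Definition qform A v : C := (adjmx v *m A *m v) 0 0.

Lemma qformD A B v : qform (A + B) v = qform A v + qform B v.
Proof. by rewrite /qform mulmxDr mulmxDl mxE. Qed.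
Lemma qformN A v : qform (- A) v = - qform A v.
Proof. by rewrite /qform mulmxN mulNmx mxE. Qed.
Lemma qformZ a A v : qform (a *: A) v = a * qform A v.
Proof. by rewrite /qform -scalemxAr -scalemxAl mxE. Qed.
Lemma qform0 v : qform 0 v = 0.
Proof. by rewrite /qform mulmx0 mul0mx mxE. Qed.
Lemma qform_sum (I : finType) (F : I -> M) v : qform (\sum_i F i) v = \sum_i qform (F i) v.
Proof. by apply: (big_morph (qform^~ v)) => [A B|]; rewrite ?qformD ?qform0. Qed.
Lemma conj_qform A v : Num.conj (qform A v) = qform (adjmx A) v.
Proof. by rewrite -adjmxE !adjmxM adjmxK mulmxA. Qed.
Lemma qform_tr A v : qform A v = \tr (A *m (v *m adjmx v)).
Proof. by rewrite /qform -trace_mx11 [in RHS]mulmxA [in RHS]mxtrace_mulC mulmxA. Qed.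

Lemma qformE A v : qform A v = \sum_i \sum_j Num.conj (v i 0) * A i j * v j 0.
Proof.
rewrite /qform mxE exchange_big; apply: eq_bigr => j _.
by rewrite mxE mulr_suml; apply: eq_bigr => i _; rewrite adjmxE.
Qed.
Lemma qform1E v : qform 1%:M v = \sum_i `|v i 0| ^+ 2.
Proof.
rewrite qformE; apply: eq_bigr => i _; rewrite (bigD1 i) //= big1 => [|j ji].
  by rewrite mxE eqxx mulr1 addr0 normCK mulrC.
by rewrite mxE eq_sym (negPf ji) mulr0 mul0r.
Qed.

Lemma hermitian_qform_real A v : hermitian A -> qform A v \is Num.real.
Proof. by move=> hA; apply/CrealP; rewrite conj_qform hA. Qed.

Lemma hermitianD A B : hermitian A -> hermitian B -> hermitian (A + B).
Proof. by rewrite /hermitian adjmxD => -> ->. Qed.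
Lemma hermitianN A : hermitian A -> hermitian (- A).
Proof. by rewrite /hermitian adjmxN => ->. Qed.
Lemma hermitianB A B : hermitian A -> hermitian B -> hermitian (A - B).
Proof. by move=> hA hB; apply/hermitianD/hermitianN. Qed.
Lemma hermitianZ (t : R) A : hermitian A -> hermitian (RtoC t *: A).
Proof. by rewrite /hermitian adjmxZ conj_RtoC => ->. Qed.
Lemma hermitian1 : hermitian (1%:M : M). Proof. exact: adjmx1. Qed.
Lemma hermitian_sum (I : finType) (F : I -> M) :
  (forall i, hermitian (F i)) -> hermitian (\sum_i F i).
Proof. by move=> hF; rewrite /hermitian adjmx_sum; apply: eq_bigr => i _; apply: hF. Qed.

Lemma mxtrace_hermitian_real A B : hermitian A -> hermitian B -> \tr (A *m B) \is Num.real.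
Proof. by move=> hA hB; apply/CrealP; rewrite -mxtrace_adj adjmxM hA hB mxtrace_mulC. Qed.

Lemma psd_hermitian A : psd A -> hermitian A. Proof. by case. Qed.
Lemma psd_qform_ge0 A v : psd A -> 0 <= qform A v. Proof. by case=> _; apply. Qed.
Lemma psd0 : psd (0 : M).
Proof. by split=> [|v]; [exact: adjmx0 | rewrite -/(qform 0 v) qform0]. Qed.
Lemma psd1 : psd (1%:M : M).
Proof.
split=> [|v]; first exact: hermitian1.
by rewrite -/(qform _ v) qform1E sumr_ge0 // => i _; rewrite exprn_ge0.
Qed.
Lemma psdD A B : psd A -> psd B -> psd (A + B).
Proof.
move=> [hA pA] [hB pB]; split=> [|v]; first exact: hermitianD.
by rewrite -/(qform _ v) qformD addr_ge0 //; [apply: pA | apply: pB].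
Qed.
Lemma psdZ (t : R) A : 0 <= t -> psd A -> psd (RtoC t *: A).
Proof.
move=> t_ge0 [hA pA]; split=> [|v]; first exact: hermitianZ.
by rewrite -/(qform _ v) qformZ mulr_ge0 ?pA // RtoCE lecR.
Qed.
Lemma psd_sum (I : finType) (F : I -> M) : (forall i, psd (F i)) -> psd (\sum_i F i).
Proof.
by move=> pF; apply: (big_ind (fun A : M => psd A)); [exact: psd0 | exact: psdD | ].
Qed.
Lemma psd_rank1 v : psd (v *m adjmx v).
Proof.
split=> [|w]; first by rewrite /hermitian adjmxM adjmxK.
rewrite !mulmxA -mulmxA mxE big_ord1.
by rewrite -[(adjmx v *m w) 0 0]conjCK -adjmxE adjmxM adjmxK mul_conjC_ge0.
Qed.

Definition entry_bound Y : R := complex.Re (\sum_i \sum_j `|Y i j|).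

Lemma entry_bound_ge0 Y : 0 <= entry_bound Y.
Proof. by apply/Re_ge0/sumr_ge0 => i _; apply: sumr_ge0. Qed.

Lemma qform_le_entry_bound Y v : hermitian Y ->
  qform Y v <= RtoC (entry_bound Y) * qform 1%:M v.
Proof.
move=> hY; rewrite RtoC_Re; last by apply/ger0_real/sumr_ge0 => i _; apply: sumr_ge0.
have norm_le i j : `|v i 0| * `|v j 0| <= qform 1%:M v.
  have sq_le k : `|v k 0| ^+ 2 <= qform 1%:M v.
    by rewrite qform1E (bigD1 k) //= lerDl sumr_ge0 // => l _; rewrite exprn_ge0.
  have /orP[h|h] := real_leVge (normr_real (v i 0)) (normr_real (v j 0)).
    by apply: le_trans (sq_le j); rewrite expr2 ler_wpM2r.
  by apply: le_trans (sq_le i); rewrite expr2 ler_wpM2l.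
apply: le_trans (real_ler_norm (hermitian_qform_real v hY)) _.
rewrite qformE !mulr_suml; apply: le_trans (ler_norm_sum _ _ _) _.
apply: ler_sum => i _; rewrite mulr_suml; apply: le_trans (ler_norm_sum _ _ _) _.
apply: ler_sum => j _; rewrite !normrM norm_conjC mulrAC mulrC.
by apply: ler_wpM2l => //; rewrite mulrC.
Qed.

End PositiveSemidefinite.

Section TraceInequalities.
Variables (R : realType) (d : nat).
Local Notation C := R[i].
Local Notation M := 'M[C]_d.
Implicit Types (A B Y : M).

Lemma psd_mxtrace_spectral A : psd A ->
  exists (u : 'I_d -> 'cV[C]_d) (D : 'I_d -> C),
    (forall k, 0 <= D k) /\ forall B, \tr (B *m A) = \sum_k D k * qform B (u k).
Proof.
move=> pA; set P := spectralmx A; set D := spectral_diag A.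
have PPt : P *m adjmx P = 1%:M by apply/unitarymxP/spectral_unitarymx.
have qform_row B k : (P *m B *m adjmx P) k k = qform B (adjmx (row k P)).
  rewrite /qform adjmxK !mxE; apply: eq_bigr => j _; rewrite !mxE.
  by congr (_ * _); apply: eq_bigr => i _; rewrite !mxE.
have A_diag : A = adjmx P *m diag_mx D *m P.
  have /orthomx_spectralP : A \is normalmx.
    by apply/normalmxP; move: (psd_hermitian pA); rewrite /hermitian /adjmx => ->.
  by rewrite invmx_unitary ?spectral_unitarymx.
exists (fun k => adjmx (row k P)), (fun k => D 0 k); split=> [k|B].
  have -> : D 0 k = (P *m A *m adjmx P) k k.
    by rewrite A_diag !mulmxA PPt mul1mx -mulmxA PPt mulmx1 mxE eqxx mulr1n.
  by rewrite qform_row psd_qform_ge0.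
rewrite A_diag !mulmxA mxtrace_mulC !mulmxA /mxtrace; apply: eq_bigr => k _.
by rewrite mul_mx_diag mxE qform_row mulrC.
Qed.

Lemma mxtrace_psd_mul_ge0 A B : psd A -> psd B -> 0 <= \tr (B *m A).
Proof.
move=> /psd_mxtrace_spectral[u [D [D_ge0 ->]]] pB.
by apply: sumr_ge0 => k _; apply: mulr_ge0 (D_ge0 k) (psd_qform_ge0 _ pB).
Qed.

Lemma psd_mxtrace_ge0 A : psd A -> 0 <= \tr A.
Proof. by move=> pA; have := mxtrace_psd_mul_ge0 pA (psd1 R d); rewrite mul1mx. Qed.

Lemma mxtrace_mul_le Y A (a : C) : psd A ->
  (forall v, qform Y v <= a * qform 1%:M v) -> \tr (Y *m A) <= a * \tr A.
Proof.
move=> /psd_mxtrace_spectral[u [D [D_ge0 trE]]] Y_le.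
rewrite trE -[A]mul1mx trE mulr_sumr; apply: ler_sum => k _.
by rewrite mulrCA ler_wpM2l.
Qed.

End TraceInequalities.

HB.lock Definition herm_part (R : realType) (d : nat) (X : 'M[R[i]]_d) : 'M[R[i]]_d :=
  RtoC 2^-1 *: (X + adjmx X).

Section HermitianPart.
Variables (R : realType) (d : nat).
Local Notation C := R[i].
Local Notation M := 'M[C]_d.
Implicit Types (A X Y : M).

Lemma herm_part_hermitian X : hermitian (herm_part X).
Proof. by rewrite /hermitian herm_part.unlock adjmxZ conj_RtoC adjmxD adjmxK addrC. Qed.
Lemma herm_partD X Y : herm_part (X + Y) = herm_part X + herm_part Y.
Proof. by rewrite herm_part.unlock adjmxD -scalerDr addrACA. Qed.
Lemma herm_partZ (t : R) X : herm_part (RtoC t *: X) = RtoC t *: herm_part X.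
Proof. by rewrite herm_part.unlock adjmxZ conj_RtoC -scalerDr !scalerA mulrC. Qed.
Lemma herm_part_id X : hermitian X -> herm_part X = X.
Proof.
move=> hX; rewrite herm_part.unlock hX -mulr2n -scaler_nat scalerA -RtoC_natr -RtoCM.
by rewrite mulVf ?pnatr_eq0 // scale1r.
Qed.

Lemma Re_mxtrace_herm_part A X : hermitian X ->
  complex.Re (\tr (herm_part A *m X)) = complex.Re (\tr (A *m X)).
Proof.
move=> hX; rewrite herm_part.unlock -scalemxAl mxtraceZ Re_RtoCM mulmxDl mxtraceD ReD.
by rewrite -[Z in adjmx A *m Z]hX -adjmxM mxtrace_adj Re_conj mxtrace_mulC; lra.
Qed.

End HermitianPart.

Section Coordinates.
Variables (R : realType) (d : nat).
Local Notation C := R[i].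
Local Notation M := 'M[C]_d.

(* Real coordinates of a complex matrix: real and imaginary part of each entry,
   plus a coordinate [None] for multiples of the identity, so that the identity
   is a coordinate vector as [finite_hahn_banach] requires. *)
Definition coord := option ('I_d * 'I_d * bool).

Definition mx_of_coord (a : {ffun coord -> R}) : M :=
  RtoC (a None) *: 1%:M +
  \matrix_(j, k) (a (Some (j, k, false)) +i* a (Some (j, k, true)))%C.

Definition coord_of_mx (X : M) : {ffun coord -> R} :=
  [ffun o => if o is Some (j, k, b) then
     (if b then complex.Im (X j k) else complex.Re (X j k)) else 0].

Definition mx_of_functional (lam : coord -> R) : M :=
  \matrix_(k, j) (lam (Some (j, k, false)) -i* lam (Some (j, k, true)))%C.

Lemma mx_of_coordD a b : mx_of_coord (a + b) = mx_of_coord a + mx_of_coord b.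
Proof.
rewrite /mx_of_coord ffunE RtoCD scalerDl addrACA; congr (_ + _).
by apply/matrixP => j k; rewrite !mxE !ffunE.
Qed.
Lemma mx_of_coordZ t a : mx_of_coord (scalef t a) = RtoC t *: mx_of_coord a.
Proof.
rewrite /mx_of_coord scalerDr ffunE RtoCM scalerA; congr (_ + _).
by apply/matrixP => j k; rewrite !mxE !ffunE /RtoC; simpc.
Qed.
Lemma mx_of_coord_delta : mx_of_coord (deltaf R (None : coord)) = 1%:M.
Proof.
rewrite /mx_of_coord ffunE eqxx scale1r -[RHS]addr0; congr (_ + _).
by apply/matrixP => j k; rewrite !mxE !ffunE.
Qed.
Lemma coord_of_mxK X : mx_of_coord (coord_of_mx X) = X.
Proof.
rewrite /mx_of_coord ffunE scale0r add0r.
by apply/matrixP => j k; rewrite !mxE !ffunE /=; case: (X j k).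
Qed.

Lemma big_coord (V : nmodType) (F : coord -> V) :
  \sum_o F o = F None + \sum_j \sum_k (F (Some (j, k, true)) + F (Some (j, k, false))).
Proof.
have -> : index_enum coord = None :: map Some (index_enum _).
  by rewrite /index_enum !unlock /= /option_enum !unlock.
rewrite big_cons big_map; congr (_ + _).
under [RHS]eq_bigr => j _ do under eq_bigr => k _ do
  rewrite -(@big_bool _ _ _ (fun b => F (Some (j, k, b)))).
by rewrite pair_bigA pair_bigA; apply: eq_bigr => -[[j k] b].
Qed.

Lemma pairing_coord_of_mx lam X :
  pairing lam (coord_of_mx X) = complex.Re (\tr (mx_of_functional lam *m X)).
Proof.
rewrite /pairing big_coord ffunE mulr0 add0r /mxtrace Re_sum exchange_big.
apply: eq_bigr => k _; rewrite mxE Re_sum; apply: eq_bigr => j _.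
by rewrite !ffunE mxE; case: (X j k) => x y /=; lra.
Qed.

End Coordinates.

(* The theorem for arbitrary psd costs [c i] (the paper's eta_i rho_i) and
   arbitrary convex cones [K i] of psd matrices (the paper's M_i(E)). *)
Section ConicDuality.
Local Open Scope classical_set_scope.
Variables (R : realType) (d n : nat).
Local Notation C := R[i].
Local Notation M := 'M[C]_d.
Variables (c : 'I_n -> M) (K : 'I_n -> set M).
Hypothesis d_gt0 : (0 < d)%N.
Hypothesis c_psd : forall i, psd (c i).
Hypothesis K0 : forall i, K i 0.
Hypothesis KD : forall i E F, K i E -> K i F -> K i (E + F).
Hypothesis KZ : forall i (t : R) E, 0 <= t -> K i E -> K i (RtoC t *: E).
Hypothesis K_psd : forall i E, K i E -> psd E.
Implicit Types (X H : M) (Mf : 'I_n -> M).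

Definition objective Mf : R := complex.Re (\sum_i \tr (c i *m Mf i)).

Definition primal_values : set R := [set r | exists Mq Mf,
  (measurement Mq Mf /\ forall i, K i (Mf i)) /\ r = objective Mf].

Definition dual_feasible H : Prop := psd H /\
  forall i, hermitian (H - c i) /\ forall F, K i F -> 0 <= \tr ((H - c i) *m F).

Definition dual_values : set R :=
  [set r | exists H, dual_feasible H /\ r = complex.Re (\tr H)].

Lemma objectiveD Mf Mf' : objective (fun i => Mf i + Mf' i) = objective Mf + objective Mf'.
Proof.
by rewrite /objective -ReD -big_split; congr complex.Re; apply: eq_bigr => i _;
  rewrite mulmxDr mxtraceD.
Qed.
Lemma objectiveZ (t : R) Mf : objective (fun i => RtoC t *: Mf i) = t * objective Mf.
Proof.
rewrite /objective -Re_RtoCM mulr_sumr; congr complex.Re; apply: eq_bigr => i _.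
by rewrite -scalemxAr mxtraceZ.
Qed.
Lemma objective0 : objective (fun _ => 0) = 0.
Proof. by rewrite /objective big1 // => i _; rewrite mulmx0 mxtrace0. Qed.
Lemma objective_delta i F : objective (fun j => if j == i then F else 0) =
  complex.Re (\tr (c i *m F)).
Proof.
rewrite /objective (bigD1 i) //= eqxx big1 ?addr0 // => j /negPf->.
by rewrite mulmx0 mxtrace0.
Qed.

Definition cost_bound : R := entry_bound (\sum_i c i).

Lemma objective_le Mf : (forall i, psd (Mf i)) ->
  objective Mf <= cost_bound * complex.Re (\tr (\sum_i Mf i)).
Proof.
have hc : hermitian (\sum_i c i) by apply: hermitian_sum => i; apply/psd_hermitian.
move=> pM; rewrite -Re_RtoCM; apply: Re_le.
rewrite raddf_sum mulr_sumr; apply: ler_sum => i _; apply: mxtrace_mul_le => // v.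
apply: le_trans (qform_le_entry_bound v hc); rewrite qform_sum (bigD1 i) //= lerDl.
by apply: sumr_ge0 => j _; apply: psd_qform_ge0.
Qed.

Lemma Re_trace_sum_le (u : R) Mf : psd (RtoC u *: 1%:M - \sum_i Mf i) ->
  complex.Re (\tr (\sum_i Mf i)) <= u * d%:R.
Proof.
move=> /psd_mxtrace_ge0/Re_ge0; rewrite raddfB /= mxtraceZ mxtrace1 ReB Re_RtoCM.
by rewrite Re_natr subr_ge0.
Qed.

Lemma primal_values0 : primal_values 0.
Proof.
exists 1%:M, (fun _ => 0); split; last by rewrite objective0.
split=> [|i]; last exact: K0.
by split; [exact: psd1 | split=> [i|]; [exact: psd0 | rewrite big1 ?addr0]].
Qed.

Lemma primal_values_ub r : primal_values r -> r <= cost_bound * d%:R.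
Proof.
move=> [Mq [Mf [[[pMq [pM sum1]] _] ->]]].
have tr_le : complex.Re (\tr (\sum_i Mf i)) <= 1 * d%:R.
  by apply: Re_trace_sum_le; rewrite scale1r -sum1 addrK.
by apply: le_trans (objective_le pM) _; rewrite ler_wpM2l ?entry_bound_ge0 // -[_%:R]mul1r.
Qed.

Definition primal_value : R := sup primal_values.

Lemma le_primal_value r : primal_values r -> r <= primal_value.
Proof. by apply: ub_le_sup; exists (cost_bound * d%:R) => r'; apply: primal_values_ub. Qed.

Lemma primal_value_ge0 : 0 <= primal_value.
Proof. exact: le_primal_value primal_values0. Qed.

Lemma weak_duality H r : dual_feasible H -> primal_values r -> r <= complex.Re (\tr H).
Proof.
move=> [pH H_dual] [Mq [Mf [[[pMq [_ sum1]] KM] ->]]]; rewrite /objective; apply: Re_le.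
have -> : \tr H = \tr (H *m \sum_i Mf i) + \tr (H *m Mq).
  by rewrite -mxtraceD -mulmxDr addrC sum1 mulmx1.
rewrite -[X in X <= _]addr0 lerD ?mxtrace_psd_mul_ge0 // mulmx_sumr raddf_sum /=.
apply: ler_sum => i _; have [_ /(_ _ (KM i))] := H_dual i.
by rewrite mulmxBl raddfB subr_ge0.
Qed.

Lemma primal_value_le_dual H : dual_feasible H -> primal_value <= complex.Re (\tr H).
Proof.
move=> H_feas; apply: ge_sup => [|r]; last exact: weak_duality.
by exists 0; apply: primal_values0.
Qed.

Lemma objective_le_scaled_primal (u : R) Mf : 0 < u -> (forall i, K i (Mf i)) ->
  psd (RtoC u *: 1%:M - \sum_i Mf i) -> objective Mf <= u * primal_value.
Proof.
move=> u_gt0 KM pS; have uV_ge0 : 0 <= u^-1 by rewrite invr_ge0 ltW.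
rewrite -ler_pdivrMl // -objectiveZ; apply: le_primal_value.
exists (RtoC u^-1 *: (RtoC u *: 1%:M - \sum_i Mf i)), (fun i => RtoC u^-1 *: Mf i).
split; last by [].
split=> [|i]; last exact: KZ.
split; first exact: psdZ.
split=> [i|]; first exact/psdZ/K_psd.
by rewrite scalerBr scalerA -RtoCM mulVf ?gt_eqF // scale1r scaler_sumr subrK.
Qed.

(* Relaxing the constraint by [t] multiples of the identity makes every
   perturbed problem feasible; charging [penalty >= cost_bound * d] per unit of
   relaxation keeps its value bounded. *)
Definition penalty : R := cost_bound * d%:R + primal_value.

Definition perturbed_values X : set R := [set r | exists Mf (t : R),
  [/\ forall i, K i (Mf i), 0 <= t,
      psd (herm_part X + RtoC t *: 1%:M - \sum_i Mf i) & r = objective Mf - penalty * t]].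

Definition perturbation X : R := sup (perturbed_values X).

Lemma perturbed_values_neq0 X : perturbed_values X !=set0.
Proof.
have hX := herm_part_hermitian X; set t := entry_bound (- herm_part X).
exists (- (penalty * t)), (fun _ => 0), t; split=> //; first exact: entry_bound_ge0.
  rewrite big1 // subr0; split=> [|v]; first exact/hermitianD/hermitianZ/hermitian1.
  have := qform_le_entry_bound v (hermitianN hX).
  by rewrite -/(qform _ v) qformD qformZ qformN -subr_ge0 opprK addrC.
by rewrite objective0 sub0r.
Qed.

Lemma perturbed_values_ub X r : perturbed_values X r ->
  r <= cost_bound * complex.Re (\tr (herm_part X)).
Proof.
move=> [Mf [t [KM t_ge0 pS ->]]].
have obj_le := objective_le (fun i => K_psd (KM i)).
have := Re_ge0 (psd_mxtrace_ge0 pS).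
rewrite !mxtraceD (raddfN (@mxtrace _ d)) !ReD ReN [\tr (RtoC t *: _)]mxtraceZ mxtrace1.
rewrite Re_RtoCM Re_natr => tr_ge0.
have := ler_wpM2l (entry_bound_ge0 (\sum_i c i)) tr_ge0.
have := mulr_ge0 primal_value_ge0 t_ge0.
rewrite /penalty /cost_bound; nra.
Qed.

Lemma le_perturbation X r : perturbed_values X r -> r <= perturbation X.
Proof.
apply: ub_le_sup; exists (cost_bound * complex.Re (\tr (herm_part X))).
by move=> r'; apply: perturbed_values_ub.
Qed.

Lemma perturbation_le X b :
  (forall r, perturbed_values X r -> r <= b) -> perturbation X <= b.
Proof. exact: ge_sup (perturbed_values_neq0 X). Qed.

Lemma perturbed_valuesD X Y r s : perturbed_values X r -> perturbed_values Y s ->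
  perturbed_values (X + Y) (r + s).
Proof.
move=> [Mf [t [KM t_ge0 pS ->]]] [Mf' [t' [KM' t'_ge0 pS' ->]]].
exists (fun i => Mf i + Mf' i), (t + t'); split; first by move=> i; apply: KD.
- exact: addr_ge0.
- have := psdD pS pS'; congr psd.
  rewrite herm_partD RtoCD scalerDl big_split opprD.
  by rewrite [LHS]addrACA (addrACA (herm_part X)).
- by rewrite objectiveD mulrDr opprD addrACA.
Qed.

Lemma perturbation_superadditive X Y :
  perturbation X + perturbation Y <= perturbation (X + Y).
Proof.
have le_pX s : perturbed_values Y s -> perturbation X <= perturbation (X + Y) - s.
  move=> Ys; apply: perturbation_le => r Xr; rewrite lerBrDr.
  exact/le_perturbation/perturbed_valuesD.
rewrite addrC -lerBrDr; apply: perturbation_le => s Ys.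
by rewrite lerBrDr addrC -lerBrDr; apply: le_pX.
Qed.

Lemma perturbed_valuesZ X r (t : R) : 0 < t -> perturbed_values X r ->
  perturbed_values (RtoC t *: X) (t * r).
Proof.
move=> t_gt0 [Mf [u [KM u_ge0 pS ->]]].
exists (fun i => RtoC t *: Mf i), (t * u); split.
- by move=> i; apply/KZ/KM/ltW.
- exact/mulr_ge0/u_ge0/ltW.
- have := psdZ (ltW t_gt0) pS; congr psd.
  by rewrite herm_partZ scalerBr scalerDr scaler_sumr scalerA -RtoCM.
- by rewrite objectiveZ mulrBr mulrCA.
Qed.

Lemma perturbation_scale_le X (t : R) : 0 < t ->
  t * perturbation X <= perturbation (RtoC t *: X).
Proof.
move=> t_gt0; rewrite mulrC -ler_pdivlMr //; apply: perturbation_le => r Xr.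
by rewrite ler_pdivlMr // mulrC; apply/le_perturbation/perturbed_valuesZ.
Qed.

Lemma perturbation_poshom X (t : R) : 0 < t ->
  perturbation (RtoC t *: X) = t * perturbation X.
Proof.
move=> t_gt0; apply/eqP; rewrite eq_le perturbation_scale_le // andbT.
have tV_gt0 : 0 < t^-1 by rewrite invr_gt0.
have := perturbation_scale_le (RtoC t *: X) tV_gt0.
rewrite scalerA -RtoCM mulVf ?gt_eqF // scale1r.
by rewrite -(ler_pM2l t_gt0) mulrA mulfV ?gt_eqF // mul1r.
Qed.

Lemma perturbation_psd_ge0 X : psd X -> 0 <= perturbation X.
Proof.
move=> pX; apply: le_perturbation; exists (fun _ => 0), 0; split => //.
  by rewrite big1 // subr0 scale0r addr0 (herm_part_id (psd_hermitian pX)).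
by rewrite objective0 mulr0 subr0.
Qed.

Lemma perturbation_ge_cost i F : K i F -> complex.Re (\tr (c i *m F)) <= perturbation F.
Proof.
move=> KF; rewrite -objective_delta; apply: le_perturbation.
exists (fun j => if j == i then F else 0), 0; split; last by rewrite mulr0 subr0.
- by move=> j; case: eqP => [->|_]; [exact: KF | exact: K0].
- by [].
- rewrite (bigD1 i) //= eqxx big1 => [|j /negPf->] //.
  rewrite addr0 scale0r addr0 (herm_part_id (psd_hermitian (K_psd KF))) subrr.
  exact: psd0.
Qed.

Lemma perturbation_scalar_le (s : R) : perturbation (RtoC s *: 1%:M) <= s * primal_value.
Proof.
apply: perturbation_le => _ [Mf [t [KM t_ge0 pS ->]]].
rewrite (herm_part_id (hermitianZ s (hermitian1 _ _))) -scalerDl -RtoCD in pS.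
have pv_le_penalty : primal_value <= penalty.
  by rewrite /penalty lerDr mulr_ge0 ?entry_bound_ge0.
have [st_gt0|st_le0] := ltP 0 (s + t).
  have := objective_le_scaled_primal st_gt0 KM pS.
  have := ler_wpM2r t_ge0 pv_le_penalty; nra.
have tr_le := Re_trace_sum_le pS.
have tr_ge0 : 0 <= complex.Re (\tr (\sum_i Mf i)).
  by apply/Re_ge0/psd_mxtrace_ge0/psd_sum => i; apply: K_psd.
have d_pos : 0 < d%:R :> R by rewrite ltr0n.
have st0 : s + t = 0.
  by apply/le_anti; rewrite st_le0 -(pmulr_lge0 _ d_pos); apply: le_trans tr_le.
have := objective_le (fun i => K_psd (KM i)).
have := ler_wpM2l (entry_bound_ge0 (\sum_i c i)) tr_le.
have := ler_wpM2r t_ge0 pv_le_penalty.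
rewrite st0 mul0r /cost_bound; nra.
Qed.

Definition gauge (a : {ffun coord d -> R}) : R := - perturbation (- mx_of_coord a).

Lemma gaugeD a b : gauge (a + b) <= gauge a + gauge b.
Proof.
rewrite /gauge mx_of_coordD -[Z in _ <= Z]opprD lerN2 (opprD (mx_of_coord a)).
exact: perturbation_superadditive.
Qed.

Lemma gauge_poshom (t : R) a : 0 < t -> gauge (scalef t a) = t * gauge a.
Proof.
by move=> t_gt0; rewrite /gauge mx_of_coordZ -scalerN perturbation_poshom // mulrN.
Qed.

Lemma gauge_delta (t : R) : t * primal_value <= gauge (scalef t (deltaf R None)).
Proof.
rewrite /gauge mx_of_coordZ mx_of_coord_delta -scaleNr -RtoCN lerNr -mulNr.
exact: perturbation_scalar_le.
Qed.

Section Certificate.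
Variable lam : coord d -> R.
Hypothesis lam_None : lam None = primal_value.
Hypothesis lam_le_gauge : forall a, pairing lam a <= gauge a.
Local Notation G := (mx_of_functional lam).

Lemma perturbation_le_functional X : perturbation X <= complex.Re (\tr (G *m X)).
Proof.
have := lam_le_gauge (coord_of_mx (- X)).
by rewrite pairing_coord_of_mx /gauge coord_of_mxK opprK mulmxN raddfN ReN lerN2.
Qed.

Lemma Re_trace_functional_le : complex.Re (\tr G) <= primal_value.
Proof.
have := lam_le_gauge (coord_of_mx 1%:M + scalef (-1) (deltaf R None)).
rewrite pairingD pairingZ pairing_delta pairing_coord_of_mx mulmx1 lam_None mulN1r.
rewrite /gauge mx_of_coordD mx_of_coordZ coord_of_mxK mx_of_coord_delta RtoCN.
rewrite scaleN1r subrr oppr0 => h; rewrite -subr_le0; apply: le_trans h _.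
by rewrite oppr_le0; apply/perturbation_psd_ge0/psd0.
Qed.

Definition certificate : M := herm_part G.

Lemma certificate_dual_feasible : dual_feasible certificate.
Proof.
have hC := herm_part_hermitian G.
have Re_cert X : hermitian X ->
    perturbation X <= complex.Re (\tr (certificate *m X)).
  by move=> hX; rewrite Re_mxtrace_herm_part //; apply: perturbation_le_functional.
split=> [|i].
  split=> // v; rewrite -/(qform _ v) qform_tr.
  have h1 := psd_hermitian (psd_rank1 v).
  apply: real_Re_ge0; first exact: mxtrace_hermitian_real.
  exact/(le_trans _ (Re_cert _ h1))/perturbation_psd_ge0/psd_rank1.
have hD := hermitianB hC (psd_hermitian (c_psd i)).
split=> // F KF; have hF := psd_hermitian (K_psd KF).
apply: real_Re_ge0; first exact: mxtrace_hermitian_real.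
rewrite mulmxBl raddfB /= ReB subr_ge0.
exact: le_trans (perturbation_ge_cost KF) (Re_cert _ hF).
Qed.

Lemma certificate_trace_le : complex.Re (\tr certificate) <= primal_value.
Proof.
rewrite -[certificate]mulmx1 Re_mxtrace_herm_part ?mulmx1; last exact: hermitian1.
exact: Re_trace_functional_le.
Qed.

End Certificate.

Theorem conic_strong_duality : sup primal_values = inf dual_values.
Proof.
have [lam [lam_None lam_le]] := finite_hahn_banach gaugeD gauge_poshom gauge_delta.
have cert_feas := certificate_dual_feasible lam_le.
apply/le_anti/andP; split.
  apply: lb_le_inf; first by exists (complex.Re (\tr (certificate lam))), (certificate lam).
  by move=> _ [H [H_feas ->]]; apply: primal_value_le_dual.
apply: le_trans (certificate_trace_le lam_None lam_le).
apply: ge_inf; last by exists (certificate lam).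
by exists primal_value => _ [H [H_feas ->]]; apply: primal_value_le_dual.
Qed.

End ConicDuality.

Section Annihilator.
Local Open Scope classical_set_scope.
Variables (R : realType) (d : nat) (A : 'M[R[i]]_d).

(* [Mset eta rho i] is the annihilator of [Cx i *: rho0 - eta i *: rho i]. *)
Definition psd_annihilator : set 'M[R[i]]_d := [set E | psd E /\ \tr (A *m E) = 0].

Lemma psd_annihilator0 : psd_annihilator 0.
Proof. by split; [exact: psd0 | rewrite mulmx0 mxtrace0]. Qed.
Lemma psd_annihilatorD E F :
  psd_annihilator E -> psd_annihilator F -> psd_annihilator (E + F).
Proof.
by move=> [pE trE] [pF trF]; split; [exact: psdD | rewrite mulmxDr mxtraceD trE trF addr0].
Qed.
Lemma psd_annihilatorZ (t : R) E :
  0 <= t -> psd_annihilator E -> psd_annihilator (RtoC t *: E).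
Proof.
by move=> t_ge0 [pE trE]; split; [exact: psdZ | rewrite -scalemxAr mxtraceZ trE mulr0].
Qed.

End Annihilator.

Section Ensemble.
Local Open Scope classical_set_scope.
Variables (R : realType) (d n : nat) (eta : 'I_n -> R) (rho : 'I_n -> 'M[R[i]]_d).

Lemma ensemble_dim_gt0 : ensemble eta rho -> (0 < d)%N.
Proof.
move=> [_ [eta_sum1 rho_density]].
have [i _|no_index] := pickP (@predT 'I_n); last first.
  by move: eta_sum1; rewrite big1 => [/eqP|i]; [rewrite eq_sym oner_eq0 | have := no_index i].
rewrite lt0n; apply/negP => /eqP d0; have [_] := rho_density i.
rewrite /mxtrace big1 => [/eqP|j _]; first by rewrite eq_sym oner_eq0.
by have := leq_trans (ltn_ord j) (eq_leq d0); rewrite ltn0.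
Qed.

Lemma pG_primal_value : pG eta rho =
  sup (primal_values (fun i => RtoC (eta i) *: rho i) (Mset eta rho)).
Proof.
congr sup; apply/seteqP; split=> r [Mq [Mf [feas ->]]]; exists Mq, Mf; split=> //;
  by rewrite /objective; congr complex.Re; apply: eq_bigr => i _; rewrite -scalemxAl mxtraceZ.
Qed.

End Ensemble.

Theorem theorem2 (R : realType) (d n : nat)
    (eta : 'I_n -> R) (rho : 'I_n -> 'M[complex.complex R]_d) :
  ensemble eta rho -> pG eta rho = qG eta rho.
Proof.
move=> ens; have [eta_gt0 [_ rho_density]] := ens.
have c_psd i : psd (RtoC (eta i) *: rho i).
  by apply: psdZ (ltW (eta_gt0 i)) (rho_density i).1.
rewrite pG_primal_value; apply: conic_strong_duality (ensemble_dim_gt0 ens) c_psd _ _ _ _.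
- by move=> i; apply: psd_annihilator0.
- by move=> i; apply: psd_annihilatorD.
- by move=> i; apply: psd_annihilatorZ.
- by move=> i E [].
Qed.
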